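(* Let $P$ be a finite poset. For every $f\in(\mathbb R^+)^P$, $$\rho_{\mathcal B}(f)=\alpha_1\bigl(\alpha_3(\alpha_2(f))\bigr),$$ where the birational maps $\alpha_1,\alpha_2,\alpha_3:(\mathbb R^+)^P\to(\mathbb R^+)^P$ are defined below.
   Context: For a finite poset $P$, let $\widehat P=P\cup\{\hat0,\hat1\}$ with $\hat0<x<\hat1$ for all $x\in P$; write $y\lessdot x$ ($x$ covers $y$) when $y<x$ and no $z$ satisfies $y<z<x$; for $x\in P$ let $x^+=\{y\in\widehat P: y\gtrdot x\}$ and $x^-=\{y\in\widehat P:y\lessdot x\}$. Each $f:P\to\mathbb R^+$ (positive reals) is extended to $\hat f$ on $\widehat P$ by $\hat f(\hat0)=\hat f(\hat1)=1$. The parallel sum of positive reals $s_1,\dots,s_m$ is $s_1\parallel\cdots\parallel s_m=(1/s_1+\cdots+1/s_m)^{-1}$. For $x\in P$ the birational toggle $\tau_x:(\mathbb R^+)^P\to(\mathbb R^+)^P$ leaves $f(y)$ unchanged for $y\neq x$ and sets $(\tau_xf)(x)=\frac{1}{f(x)}\Bigl(\sum_{y\in x^-}\hat f(y)\Bigr)\Bigl(\,\big\|_{y\in x^+}\hat f(y)\Bigr)$. Birational rowmotion is $\rho_{\mathcal B}=\tau_{x_1}\circ\cdots\circ\tau_{x_p}$ for any linear extension $x_1,\dots,x_p$ of $P$ (top elements toggled first; independent of the choice). Define $(\alpha_1 f)(x)=1/f(x)$; $(\alpha_2f)(x)=\big\|_{y\in x^-}\,\bigl(f(x)/\hat f(y)\bigr)$;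 and $\alpha_3 f$ recursively from the top by $(\alpha_3f)(\hat1)=1$ and $(\alpha_3f)(x)=f(x)\sum_{y\in x^+}(\alpha_3f)(y)$ for $x\in P$. *)

From HB Require Import structures.
From mathcomp Require Import all_boot all_order all_algebra.
Set Implicit Arguments. Unset Strict Implicit. Unset Printing Implicit Defensive.
Import Order.TTheory GRing.Theory Num.Theory.

(* The extended poset \hat P = P + {\hat0, \hat1} is encoded implicitly:
   - a covering pair y <. x inside P is [covby y x];
   - \hat0 is covered by x iff x is minimal in P;
   - x is covered by \hat1 iff x is maximal in P;
   - \hat f(\hat0) = \hat f(\hat1) = 1. *)

Definition covby {d} {P : finPOrderType d} (y x : P) : bool :=
  (y < x)%O && [forall z : P, ~~ ((y < z)%O && (z < x)%O)].

Definition minimal {d} {P : finPOrderType d} (x : P) : bool :=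
  [forall z : P, ~~ (z < x)%O].

Definition maximal {d} {P : finPOrderType d} (x : P) : bool :=
  [forall z : P, ~~ (x < z)%O].

Local Open Scope ring_scope.

Section Defs.
Context {d : Order.disp_t} {P : finPOrderType d} {R : realFieldType}.

Definition down_sum (f : P -> R) (x : P) : R :=
  \sum_(y : P | covby y x) f y + (minimal x)%:R * 1.

Definition up_par (f : P -> R) (x : P) : R :=
  (\sum_(y : P | covby x y) (f y)^-1 + (maximal x)%:R * 1^-1)^-1.

Definition toggle (x : P) (f : P -> R) : P -> R :=
  fun y => if y == x then (f x)^-1 * down_sum f x * up_par f x else f y.

Definition rowmotion_along (s : seq P) (f : P -> R) : P -> R :=
  foldr toggle f s.

Definition linear_extension (s : seq P) : Prop :=
  perm_eq s (enum P) /\ pairwise (fun a b => ~~ (b < a)%O) s.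

Definition alpha1 (f : P -> R) : P -> R := fun x => (f x)^-1.

Definition alpha2 (f : P -> R) : P -> R := fun x =>
  (\sum_(y : P | covby y x) (f x / f y)^-1 + (minimal x)%:R * (f x / 1)^-1)^-1.

(* recursion from the top with fuel: (alpha3 f)(\hat1) = 1,
   (alpha3 f)(x) = f(x) * sum_{y in x^+} (alpha3 f)(y) *)
Fixpoint alpha3_fuel (n : nat) (f : P -> R) (x : P) : R :=
  match n with
  | 0%N => 0
  | n'.+1 => f x * (\sum_(y : P | covby x y) alpha3_fuel n' f y + (maximal x)%:R * 1)
  end.

Definition alpha3 (f : P -> R) : P -> R := alpha3_fuel #|P| f.

End Defs.

From HB Require Import structures.
From mathcomp Require Import all_boot all_order all_algebra.
Import Order.TTheory GRing.Theory Num.Theory.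
Local Open Scope ring_scope.

(* Toggling along a linear extension from the top, each toggle at x sees the
   original values below x and the already-toggled values above x.  Hence
   g := rho_B f satisfies g x = f(x)^-1 (sum_{x^-} f) (||_{x^+} g), i.e.
   1/g x = alpha2 f x * sum_{x^+} 1/g, which is exactly the top-down recursion
   defining alpha3 (alpha2 f); that recursion has a unique solution. *)

Section Rowmotion.
Context {d : Order.disp_t} {P : finPOrderType d} {R : realFieldType}.
Implicit Types (f g : P -> R) (s : seq P) (x y : P).

Lemma toggle_id x f : toggle x f x = (f x)^-1 * down_sum f x * up_par f x.
Proof. by rewrite /toggle eqxx. Qed.

Lemma toggle_other x y f : y != x -> toggle x f y = f y.
Proof. by move=> yx; rewrite /toggle (negbTE yx). Qed.

Lemma rowmotion_along_notin s f x :
  x \notin s -> rowmotion_along s f x = f x.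
Proof.
elim: s => [|a s IH] //=; rewrite in_cons negb_or => /andP[xa xs].
by rewrite toggle_other // IH.
Qed.

Lemma eq_down_sum f g x :
  (forall y, covby y x -> f y = g y) -> down_sum f x = down_sum g x.
Proof. by move=> fg; rewrite /down_sum (eq_bigr _ fg). Qed.

Lemma eq_up_par f g x :
  (forall y, covby x y -> f y = g y) -> up_par f x = up_par g x.
Proof.
by move=> fg; rewrite /up_par (eq_bigr _ (fun y xy => congr1 _ (fg y xy))).
Qed.

Lemma rowmotion_along_toggled s f x :
  uniq s -> pairwise (fun a b => ~~ (b < a)%O) s -> x \in s ->
  rowmotion_along s f x =
    (f x)^-1 * down_sum f x * up_par (rowmotion_along s f) x.
Proof.
elim: s => [|a s IH] //= /andP[aNs us] /andP[a_low ps].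
have a_notin_above z : (z \in s) || (z == a) ->
    up_par (toggle a (rowmotion_along s f)) z = up_par (rowmotion_along s f) z.
  move=> zs; apply: eq_up_par => y /andP[zy _]; apply: toggle_other.
  apply: contraTneq zy => ->; case/orP: zs => [zs|/eqP->]; last by rewrite ltxx.
  exact: (allP a_low z zs).
rewrite in_cons; case: (eqVneq x a) => [->|xa] /= xs.
- rewrite toggle_id rowmotion_along_notin // a_notin_above ?eqxx ?orbT //.
  congr (_ * _ * _); apply: eq_down_sum => y /andP[ya _].
  apply: rowmotion_along_notin; apply: contraL ya => ys.
  exact: (allP a_low y ys).
- by rewrite toggle_other // IH // a_notin_above ?xs.
Qed.

Lemma rowmotion_along_linear_extension s f x : linear_extension s ->
  rowmotion_along s f x =
    (f x)^-1 * down_sum f x * up_par (rowmotion_along s f) x.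
Proof.
case=> s_perm s_low; apply: rowmotion_along_toggled => //.
  by rewrite (perm_uniq s_perm) enum_uniq.
by rewrite (perm_mem s_perm) mem_enum.
Qed.

Lemma alpha2E f x : alpha2 f x = f x / down_sum f x.
Proof.
rewrite /alpha2 /down_sum; under eq_bigr => y _ do rewrite invf_div.
by rewrite divr1 -mulr_suml mulr1 -mulrDl invf_div.
Qed.

Definition upset_card x : nat := #|[set z | (x < z)%O]|.

Lemma upset_card_covby x y : covby x y -> (upset_card y < upset_card x)%N.
Proof.
case/andP=> xy _; apply: proper_card; apply/properP; split.
  by apply/subsetP => z; rewrite !inE => /(lt_trans xy).
by exists y; rewrite !inE ?ltxx.
Qed.

Lemma upset_card_lt x : (upset_card x < #|P|)%N.
Proof.
rewrite -cardsT; apply: proper_card; apply/properP; split.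
  by apply/subsetP => z; rewrite !inE.
by exists x; rewrite !inE ?ltxx.
Qed.

Lemma alpha3_fuel_solution f g :
  (forall x, g x = f x * (\sum_(y | covby x y) g y + (maximal x)%:R * 1)) ->
  forall n x, (upset_card x < n)%N -> alpha3_fuel n f x = g x.
Proof.
move=> g_rec; elim=> [|n IH] x //= x_lt; rewrite g_rec; congr (_ * (_ + _)).
apply: eq_bigr => y xy; apply: IH.
by apply: leq_trans (upset_card_covby _ _ xy) _; rewrite -ltnS.
Qed.

Lemma alpha3_solution f g :
  (forall x, g x = f x * (\sum_(y | covby x y) g y + (maximal x)%:R * 1)) ->
  forall x, alpha3 f x = g x.
Proof. by move=> g_rec x; apply: alpha3_fuel_solution (upset_card_lt x). Qed.

End Rowmotion.

Theorem theorem3 (d : Order.disp_t) (P : finPOrderType d) (R : realFieldType)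
  (f : P -> R) (hf : forall x : P, 0 < f x)
  (s : seq P) (hs : linear_extension s) :
  forall x : P, rowmotion_along s f x = alpha1 (alpha3 (alpha2 f)) x.
Proof.
move=> x; rewrite /alpha1; set g := rowmotion_along s f.
suff -> : alpha3 (alpha2 f) x = (g x)^-1 by rewrite invrK.
apply: (@alpha3_solution _ _ _ _ (fun y => (g y)^-1)) => {}x.
rewrite {1}/g rowmotion_along_linear_extension // alpha2E /up_par invr1.
by rewrite !invfM !invrK.
Qed.
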